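(* Let $P$ be a finite poset and $E$ an equivalence relation on $P$. Then there exist a poset $P'$ on the same ground set, obtained from $P$ by adding order relations (i.e. $x\le_Py\Rightarrow x\le_{P'}y$), and an equivalence relation $E'$ on $P$ whose classes are unions of classes of $E$, such that $E'$ is a chain congruence on $P'$ and $K_{P,E}(\mathbf x)=K_{P',E'}(\mathbf x)$.
   Context: For a finite poset $P$ and equivalence relation $E$ on $P$, $K_{P,E}(\mathbf x)=\sum_f\prod_{x\in P}x_{f(x)}$, summed over all $f:P\to\mathbb Z_{>0}$ such that $x<_Py\Rightarrow f(x)\le f(y)$ and $x\sim_E y\Rightarrow f(x)=f(y)$. An equivalence relation $E$ on $P$ is a chain congruence if (i) every class $[x]_E$ is a chain in $P$, and (ii) whenever $x<_Py$ and $x\not\sim_Ey$, we have $\max[x]_E<_P\min[y]_E$. *)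

From mathcomp Require Import all_boot.
Set Implicit Arguments. Unset Strict Implicit. Unset Printing Implicit Defensive.

Definition is_poset (T : finType) (le : rel T) : Prop :=
  reflexive le /\ antisymmetric le /\ transitive le.

Definition is_equiv (T : finType) (E : rel T) : Prop :=
  reflexive E /\ symmetric E /\ transitive E.

Definition ltP (T : finType) (le : rel T) (x y : T) : bool := (x != y) && le x y.

Definition is_class_max (T : finType) (le E : rel T) (x m : T) : Prop :=
  E x m /\ forall z, E x z -> le z m.
Definition is_class_min (T : finType) (le E : rel T) (x m : T) : Prop :=
  E x m /\ forall z, E x z -> le m z.

Definition chain_congruence (T : finType) (le E : rel T) : Prop :=
  (forall x y z, E x y -> E x z -> le y z || le z y) /\
  (forall x y, ltP le x y -> ~~ E x y ->
     forall mx my, is_class_max le E x mx -> is_class_min le E y my ->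
       ltP le mx my).

(* (P,E)-compatible maps, with values in {1,...,n} encoded as 'I_n
   (ordinal i stands for the variable x_{i+1}). *)
Definition PE_compat (T : finType) (le E : rel T) (n : nat) (f : T -> 'I_n) : bool :=
  [forall x, forall y, (ltP le x y ==> (f x <= f y)) && (E x y ==> (f x == f y))].

(* Coefficient of the monomial x_1^{a_0} ... x_n^{a_{n-1}} in K_{P,E}(x). *)
Definition Kcoef (T : finType) (le E : rel T) (n : nat) (a : 'I_n -> nat) : nat :=
  #|[set f : {ffun T -> 'I_n} |
      PE_compat le E f && [forall i, #|[set x | f x == i]| == a i]]|.

(* Equality of the formal power series K_{P,E} and K_{P',E'}:
   all monomial coefficients agree (every monomial lives in finitely many
   variables x_1..x_n). *)
Definition K_equal (T : finType) (le E le' E' : rel T) : Prop :=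
  forall (n : nat) (a : 'I_n -> nat), Kcoef le E a = Kcoef le' E' a.

(* Let Q be the preorder generated by le and E. Its symmetric part E' has
   E-saturated classes, and a map is (P,E)-compatible exactly when it is
   monotone along Q, i.e. (P',E')-compatible for any pair (P',E') generating
   the same preorder Q. So take for P' the order that compares elements of
   distinct E'-classes by Q and orders each E'-class by a linear extension of
   le: then P' and E' generate Q again, every E'-class is a P'-chain, and
   distinct classes are strictly Q-comparable as wholes. *)
From Pilot Require Import Defs.
From mathcomp Require Import all_boot.
From mathcomp Require Import zify.
Set Implicit Arguments. Unset Strict Implicit. Unset Printing Implicit Defensive.

Lemma connect_sub_preorder (T : finType) (e r : rel T) :
  reflexive r -> transitive r -> subrel e r -> subrel (connect e) r.
Proof.
move=> r_refl r_trans e_r x _ /connectP [p e_p ->].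
elim: p x e_p => [|y p IHp] x //= /andP [/e_r r_xy /IHp].
exact: r_trans.
Qed.

Section CompatibleMaps.
Variables (T : finType) (n : nat).

Lemma PE_compat_connectP (le E : rel T) (f : T -> 'I_n) :
  symmetric E ->
  reflect (forall x y, connect (relU le E) x y -> f x <= f y) (PE_compat le E f).
Proof.
move=> E_sym; apply: (iffP forallP) => [f_compat | f_mono x].
  apply: (connect_sub_preorder (r := [rel x y | f x <= f y])) => [x | y x z | ].
  - exact: leqnn.
  - exact: leq_trans.
  move=> x y /=; have /forallP /(_ y) /andP [lt_f E_f] := f_compat x.
  case/orP=> [le_xy | /(implyP E_f) /eqP -> //].
  by have [-> // | ne_xy] := eqVneq x y; apply: (implyP lt_f); rewrite /Defs.ltP ne_xy.
apply/forallP=> y; apply/andP; split; apply/implyP.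
  by case/andP=> _ le_xy; apply/f_mono/connect1; rewrite /= le_xy.
move=> E_xy; rewrite -val_eqE eqn_leq !f_mono ?connect1 //=.
  by rewrite E_sym E_xy orbT.
by rewrite E_xy orbT.
Qed.

Lemma Kcoef_eq_connect (le E le' E' : rel T) (a : 'I_n -> nat) :
  symmetric E -> symmetric E' -> connect (relU le E) =2 connect (relU le' E') ->
  Kcoef le E a = Kcoef le' E' a.
Proof.
move=> E_sym E'_sym eq_conn; apply: eq_card => f; rewrite !inE.
congr (_ && _); apply/PE_compat_connectP/PE_compat_connectP => // f_mono x y.
  by rewrite -eq_conn; apply: f_mono.
by rewrite eq_conn; apply: f_mono.
Qed.

End CompatibleMaps.

Section LinearExtension.
Variables (T : finType) (le : rel T).

Definition poset_rank (x : T) : nat := #|[set z | le z x]| * #|T| + enum_rank x.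

Lemma poset_rank_inj : injective poset_rank.
Proof.
move=> x y eq_rank; have : poset_rank x %% #|T| = poset_rank y %% #|T|.
  by rewrite eq_rank.
rewrite !modnMDl !modn_small ?ltn_ord // => /val_inj; exact: enum_rank_inj.
Qed.

Lemma poset_rank_homo : is_poset le -> {homo poset_rank : x y / le x y >-> x <= y}.
Proof.
case=> le_refl [le_anti le_trans] x y le_xy.
have [-> // | ne_xy] := eqVneq x y.
have lt_down : #|[set z | le z x]| < #|[set z | le z y]|.
  apply/proper_card/properP; split.
    by apply/subsetP=> z; rewrite !inE => /le_trans; apply.
  exists y; rewrite !inE ?le_refl //; apply: contraNN ne_xy => le_yx.
  by apply/eqP/le_anti; rewrite le_xy le_yx.
have rank_x_lt : enum_rank x < #|T| := ltn_ord _.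
have := leq_mul lt_down (leqnn #|T|); rewrite /poset_rank mulSn; lia.
Qed.

End LinearExtension.

Section PreorderRefinement.
Variables (T : finType) (Q : rel T) (rank : T -> nat).
Hypotheses (Q_refl : reflexive Q) (Q_trans : transitive Q).
Hypothesis rank_inj : injective rank.

Definition preorder_equiv : rel T := fun x y => Q x y && Q y x.

Definition preorder_refine : rel T :=
  fun x y => (Q x y && ~~ Q y x) || (preorder_equiv x y && (rank x <= rank y)).

Lemma preorder_equiv_equiv : is_equiv preorder_equiv.
Proof.
split; first by move=> x; rewrite /preorder_equiv Q_refl.
split; first by move=> x y; rewrite /preorder_equiv andbC.
move=> y x z /andP [Qxy Qyx] /andP [Qyz Qzy].
by rewrite /preorder_equiv (Q_trans Qxy Qyz) (Q_trans Qzy Qyx).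
Qed.

Lemma sub_preorder_equiv (r : rel T) :
  symmetric r -> subrel r Q -> subrel r preorder_equiv.
Proof. by move=> r_sym r_Q x y r_xy; rewrite /preorder_equiv !r_Q // r_sym. Qed.

Lemma preorder_refine_sub : subrel preorder_refine Q.
Proof. by move=> x y /orP [] /andP [] // /andP []. Qed.

Lemma preorder_refine_poset : is_poset preorder_refine.
Proof.
split; first by move=> x; rewrite /preorder_refine /preorder_equiv Q_refl leqnn orbT.
split.
  move=> x y /andP [le_xy le_yx].
  have Qxy := preorder_refine_sub le_xy; have Qyx := preorder_refine_sub le_yx.
  move: le_xy le_yx; rewrite /preorder_refine /preorder_equiv Qxy Qyx /=.
  move=> le_rxy le_ryx.
  by apply: rank_inj; apply/eqP; rewrite eqn_leq le_rxy le_ryx.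
move=> y x z; rewrite /preorder_refine /preorder_equiv.
case/orP=> [/andP [Qxy nQyx] | /andP [/andP [Qxy Qyx] le_rxy]];
case/orP=> [/andP [Qyz nQzy] | /andP [/andP [Qyz Qzy] le_ryz]];
rewrite (Q_trans Qxy Qyz) /=.
- by apply/orP; left; apply: contra nQyx => /(Q_trans Qyz).
- by apply/orP; left; apply: contra nQyx => /(Q_trans Qyz).
- by apply/orP; left; apply: contra nQzy => /Q_trans; apply.
- by rewrite (Q_trans Qzy Qyx) (leq_trans le_rxy le_ryz) orbT.
Qed.

Lemma preorder_refine_ext (r : rel T) :
  subrel r Q -> {homo rank : x y / r x y >-> x <= y} -> subrel r preorder_refine.
Proof.
move=> r_Q r_rank x y r_xy; rewrite /preorder_refine /preorder_equiv r_Q //=.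
by case: (Q y x); rewrite ?r_rank ?orbT.
Qed.

Lemma preorder_refine_chain_congruence :
  chain_congruence preorder_refine preorder_equiv.
Proof.
have [_ [Eq_sym Eq_trans]] := preorder_equiv_equiv.
split=> [x y z Eq_xy Eq_xz | x y /andP [_ /preorder_refine_sub Qxy] nEq_xy
         mx my [Eq_xmx _] [Eq_ymy _]].
  have Eq_yz : preorder_equiv y z by apply: Eq_trans Eq_xz; rewrite Eq_sym.
  rewrite /preorder_refine Eq_yz Eq_sym Eq_yz.
  by case/orP: (leq_total (rank y) (rank z)) => ->; rewrite !orbT.
case/andP: Eq_xmx => _ Qmxx; case/andP: Eq_ymy => Qymy _.
have nQyx : ~~ Q y x by apply: contra nEq_xy; rewrite /preorder_equiv Qxy.
apply/andP; split.
  apply: contraNneq nQyx => eq_m; rewrite eq_m in Qmxx.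
  exact: Q_trans Qymy Qmxx.
rewrite /preorder_refine (Q_trans Qmxx (Q_trans Qxy Qymy)) /=.
by apply/orP; left; apply: contra nQyx => Qmymx; apply: Q_trans Qymy (Q_trans Qmymx Qmxx).
Qed.

Lemma connect_preorder_refine :
  subrel (connect (relU preorder_refine preorder_equiv)) Q.
Proof.
apply: connect_sub_preorder => // x y /orP [/preorder_refine_sub // | /andP []//].
Qed.

End PreorderRefinement.

Theorem lemma6p1 (T : finType) (le E : rel T) :
  is_poset le -> is_equiv E ->
  exists (le' E' : rel T),
    is_poset le' /\ is_equiv E' /\
    (forall x y, le x y -> le' x y) /\
    (forall x y, E x y -> E' x y) /\
    chain_congruence le' E' /\
    K_equal le E le' E'.
Proof.
move=> le_poset [_ [E_sym _]].
pose Q := connect (relU le E).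
have Q_refl : reflexive Q := @connect0 _ _.
have Q_trans : transitive Q := @connect_trans _ _.
have le_Q : subrel le Q by move=> x y le_xy; apply: connect1; rewrite /= le_xy.
have E_Q : subrel E Q by move=> x y E_xy; apply: connect1; rewrite /= E_xy orbT.
pose le' := preorder_refine Q (poset_rank le); pose E' := preorder_equiv Q.
have le_le' : subrel le le' := preorder_refine_ext le_Q (poset_rank_homo le_poset).
have E_E' : subrel E E' := sub_preorder_equiv E_sym E_Q.
have [_ [E'_sym _]] := preorder_equiv_equiv Q_refl Q_trans.
exists le', E'.
split; first exact: preorder_refine_poset (@poset_rank_inj T le).
split; first exact: preorder_equiv_equiv.
split; first exact: le_le'.
split; first exact: E_E'.
split; first exact: preorder_refine_chain_congruence.
move=> n a; apply: Kcoef_eq_connect E_sym E'_sym _ => x y; apply/idP/idP.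
  apply: connect_sub => {}x {}y /orP [/le_le' | /E_E'] edge;
  apply: connect1; apply/orP; by [left | right].
exact: connect_preorder_refine.
Qed.
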